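(* Let $m\ge n$, $B\in\mathbb R^{n\times m}$ of full row rank, $f,h$ convex and continuously differentiable with Lipschitz gradients, $\mathcal L(u,p)=f(u)-h(p)+(Bu,p)$ with saddle point $(u^*,p^* )$, and $\mathcal I_{\mathcal V},\mathcal I_{\mathcal Q}$ symmetric positive definite. Suppose $f\in\mathcal S^{1,1}_{\mu_{f,\mathcal I_{\mathcal V}},L_{f,\mathcal I_{\mathcal V}}}$ with respect to $\mathcal I_{\mathcal V}$ with $0<\mu_{f,\mathcal I_{\mathcal V}}\le L_{f,\mathcal I_{\mathcal V}}<2$. Let $(u_k,p_k)_{k\ge0}$ satisfy the implicit Euler scheme $$u_{k+1}=u_k+\alpha_k\mathcal G^u(u_{k+1},p_{k+1}),\qquad p_{k+1}=p_k+\alpha_k\mathcal G^p(u_{k+1},p_{k+1})$$ with step sizes $\alpha_k>0$. Then for every $\alpha_k>0$ and $k\ge0$, $$\mathcal E(u_{k+1},p_{k+1})\le\frac{1}{1+\alpha_k\mu}\mathcal E(u_k,p_k),$$ where $\mu=\min\{\mu_{\mathcal V},\mu_{\mathcal Q}\}$.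
   Context: For SPD $M$, $\|x\|_M=(Mx,x)^{1/2}$; $D_g(y,x)=g(y)-g(x)-(\nabla g(x),y-x)$; $g\in\mathcal S^{1,1}_{\mu_{g,M},L_{g,M}}$ w.r.t. $M$ means $\frac{\mu_{g,M}}2\|x-y\|_M^2\le D_g(y,x)\le\frac{L_{g,M}}2\|x-y\|_M^2$ for all $x,y$. A saddle point satisfies $\nabla f(u^* )+B^\top p^*=0$, $Bu^*=\nabla h(p^* )$. Define $e(u)=u-\mathcal I_{\mathcal V}^{-1}\nabla f(u)$, $h_B(p)=h(p)+\frac12(B\mathcal I_{\mathcal V}^{-1}B^\top p,p)$, $\mathcal G^u(u,p)=-\mathcal I_{\mathcal V}^{-1}(\nabla f(u)+B^\top p)$, $\mathcal G^p(u,p)=-\mathcal I_{\mathcal Q}^{-1}(\nabla h_B(p)-Be(u))$, and $\mathcal E(u,p)=\frac12\|u-u^*\|^2_{\mathcal I_{\mathcal V}}+\frac12\|p-p^*\|^2_{\mathcal I_{\mathcal Q}}$. Constants: $\mu_{\mathcal V}=\mu_{f,\mathcal I_{\mathcal V}}$, $\mu_{\mathcal Q}=(2-L_{f,\mathcal I_{\mathcal V}})\mu_{h_B,\mathcal I_{\mathcal Q}}$, where $\mu_{h_B,\mathcal I_{\mathcal Q}}$ is the strong convexity constant of $h_B$ with respect to $\mathcal I_{\mathcal Q}$. *)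

From HB Require Import structures.
From mathcomp Require Import all_boot all_order all_algebra.
From mathcomp Require Import all_classical all_reals all_analysis.
Set Implicit Arguments. Unset Strict Implicit. Unset Printing Implicit Defensive.
Import Order.TTheory GRing.Theory Num.Theory.
Import numFieldNormedType.Exports.
Local Open Scope ring_scope.

Section Defs.
Variable R : realType.

Definition dot m (x y : 'cV[R]_m) : R := (x^T *m y) 0 0.

Definition sqnormM m (M : 'M[R]_m) (x : 'cV[R]_m) : R := dot (M *m x) x.

Definition SPD m (M : 'M[R]_m) : Prop :=
  M^T = M /\ forall x : 'cV[R]_m, x != 0 -> 0 < sqnormM M x.

Definition convex_fun m (g : 'cV[R]_m -> R) : Prop :=
  forall (x y : 'cV[R]_m) (t : R), 0 <= t <= 1 ->
    g (t *: x + (1 - t) *: y) <= t * g x + (1 - t) * g y.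

Definition is_gradient m (g : 'cV[R]_m -> R) (gg : 'cV[R]_m -> 'cV[R]_m) : Prop :=
  forall x, differentiable g x /\ forall v, is_derive x v g (dot (gg x) v).

Definition Dg m (g : 'cV[R]_m -> R) (gg : 'cV[R]_m -> 'cV[R]_m) (y x : 'cV[R]_m) : R :=
  g y - g x - dot (gg x) (y - x).

Definition S11 m (g : 'cV[R]_m -> R) (gg : 'cV[R]_m -> 'cV[R]_m)
  (M : 'M[R]_m) (mu L : R) : Prop :=
  forall x y, mu / 2 * sqnormM M (x - y) <= Dg g gg y x
              /\ Dg g gg y x <= L / 2 * sqnormM M (x - y).

Definition strongly_convex m (g : 'cV[R]_m -> R) (gg : 'cV[R]_m -> 'cV[R]_m)
  (M : 'M[R]_m) (mu : R) : Prop :=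
  forall x y, mu / 2 * sqnormM M (x - y) <= Dg g gg y x.

Variables (n m : nat).
Implicit Types (B : 'M[R]_(n, m)) (IV : 'M[R]_m) (IQ : 'M[R]_n).

Definition e_op IV (gf : 'cV[R]_m -> 'cV[R]_m) (u : 'cV[R]_m) : 'cV[R]_m :=
  u - invmx IV *m gf u.

Definition hB B IV (h : 'cV[R]_n -> R) (p : 'cV[R]_n) : R :=
  h p + 1 / 2 * dot (B *m invmx IV *m B^T *m p) p.
Definition grad_hB B IV (gh : 'cV[R]_n -> 'cV[R]_n) (p : 'cV[R]_n) : 'cV[R]_n :=
  gh p + B *m invmx IV *m B^T *m p.

Definition Gu B IV (gf : 'cV[R]_m -> 'cV[R]_m) (u : 'cV[R]_m) (p : 'cV[R]_n) : 'cV[R]_m :=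
  - (invmx IV *m (gf u + B^T *m p)).

Definition Gp B IV IQ (gf : 'cV[R]_m -> 'cV[R]_m) (gh : 'cV[R]_n -> 'cV[R]_n)
  (u : 'cV[R]_m) (p : 'cV[R]_n) : 'cV[R]_n :=
  - (invmx IQ *m (grad_hB B IV gh p - B *m e_op IV gf u)).

Definition Lyap IV IQ (us : 'cV[R]_m) (ps : 'cV[R]_n) (u : 'cV[R]_m) (p : 'cV[R]_n) : R :=
  1 / 2 * sqnormM IV (u - us) + 1 / 2 * sqnormM IQ (p - ps).

End Defs.

(* The Lyapunov function E decreases because the vector field G = (G^u, G^p)
   has the strong Lyapunov property: at every point (u, p),
   - (I_V G^u, u - u* ) - (I_Q G^p, p - p* ) >= mu E(u, p).
   Using the saddle point equations the coupling terms cancel, and what is left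
   is the monotonicity term of grad f, which by the S11 bounds dominates
   mu_f/2 ||u - u*||^2 + ||grad f(u) - grad f(u* )||^2_{I_V^-1} / (2 L_f),
   plus the monotonicity term of grad h_B, which dominates mu_hB ||p - p*||^2,
   plus a mixed term that Young's inequality absorbs into the first two at the
   price of the factor 1 - L_f/2.  For the implicit scheme, expanding
   ||x_k - x*||^2 around x_{k+1} produces exactly this cross term at the new
   iterate, and dropping ||x_{k+1} - x_k||^2 gives (1 + alpha_k mu) E_{k+1} <= E_k. *)

From HB Require Import structures.
From mathcomp Require Import all_boot all_order all_algebra.
From mathcomp Require Import all_classical all_reals all_analysis.
From mathcomp Require Import ring lra.
Import Order.TTheory GRing.Theory Num.Theory.
Import numFieldNormedType.Exports.
Local Open Scope ring_scope.
Set Implicit Arguments. Unset Strict Implicit.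

Section InnerProduct.
Variables (R : realType) (k : nat).
Implicit Types (x y z v : 'cV[R]_k) (M : 'M[R]_k) (a : R).

Lemma dotC x y : dot x y = dot y x.
Proof.
have tr00 : ((x^T *m y)^T) 0 0 = (x^T *m y) 0 0 by rewrite mxE.
by rewrite /dot -tr00 trmx_mul trmxK.
Qed.

Lemma dotDl x y z : dot (x + y) z = dot x z + dot y z.
Proof. by rewrite /dot linearD /= mulmxDl mxE. Qed.

Lemma dotZl a x z : dot (a *: x) z = a * dot x z.
Proof. by rewrite /dot linearZ /= -scalemxAl mxE. Qed.

Lemma dotNl x z : dot (- x) z = - dot x z.
Proof. by rewrite -scaleN1r dotZl mulN1r. Qed.

Lemma dotBl x y z : dot (x - y) z = dot x z - dot y z.
Proof. by rewrite dotDl dotNl. Qed.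

Lemma dotDr x y z : dot z (x + y) = dot z x + dot z y.
Proof. by rewrite dotC dotDl !(dotC _ z). Qed.

Lemma dotZr a x z : dot z (a *: x) = a * dot z x.
Proof. by rewrite dotC dotZl dotC. Qed.

Lemma dotNr x z : dot z (- x) = - dot z x.
Proof. by rewrite dotC dotNl dotC. Qed.

Lemma dotBr x y z : dot z (x - y) = dot z x - dot z y.
Proof. by rewrite dotDr dotNr. Qed.

Lemma dot0l z : dot 0 z = 0.
Proof. by rewrite /dot linear0 mul0mx mxE. Qed.

Lemma dotMl l (A : 'M[R]_(k, l)) (x : 'cV[R]_l) y : dot (A *m x) y = dot x (A^T *m y).
Proof. by rewrite /dot trmx_mul mulmxA. Qed.

Lemma dot_symmx M x y : M^T = M -> dot (M *m x) y = dot (M *m y) x.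
Proof. by move=> sym; rewrite dotMl sym dotC. Qed.

Lemma sqnormMZ M a x : sqnormM M (a *: x) = a ^+ 2 * sqnormM M x.
Proof. by rewrite /sqnormM -scalemxAr dotZl dotZr mulrA. Qed.

Lemma sqnormMN M x : sqnormM M (- x) = sqnormM M x.
Proof. by rewrite /sqnormM mulmxN dotNl dotNr opprK. Qed.

Lemma sqnormMB M x y : M^T = M ->
  sqnormM M (x - y) = sqnormM M x - 2 * dot (M *m y) x + sqnormM M y.
Proof.
move=> sym; rewrite /sqnormM mulmxBr dotBl !dotBr (dot_symmx x y sym); lra.
Qed.

Lemma sqnormM_ge0 M x : SPD M -> 0 <= sqnormM M x.
Proof.
case=> _ pos; have [->|/pos/ltW //] := eqVneq x 0.
by rewrite /sqnormM mulmx0 dot0l.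
Qed.

Lemma SPD_unitmx M : SPD M -> M \in unitmx.
Proof.
case=> sym pos; rewrite unitmxE unitfE; apply/negP => /det0P[w w_neq0 wM0].
have x_neq0 : w^T != 0 by rewrite trmx_eq0.
have := pos _ x_neq0; rewrite /sqnormM -{1}sym -trmx_mul wM0 trmx0 dot0l.
by rewrite ltxx.
Qed.

Lemma dot_invmx_ge0 M x : SPD M -> 0 <= dot (invmx M *m x) x.
Proof.
move=> spd; rewrite dotC -[x in dot x _](mulKVmx (SPD_unitmx spd)).
exact: sqnormM_ge0.
Qed.

Lemma dot_invmx_Young M L x y : SPD M -> 0 < L ->
  - dot (invmx M *m x) y
    <= L / 2 * dot (invmx M *m y) y + 1 / (2 * L) * dot (invmx M *m x) x.
Proof.
move=> spd L_gt0; set V := invmx M.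
have symV : V^T = V by rewrite trmx_inv spd.1.
have := dot_invmx_ge0 (L *: y + x) spd.
rewrite -/V mulmxDr -scalemxAr !dotDl !dotDr !dotZl !dotZr (dot_symmx y x symV).
set Vyy := dot (V *m y) y; set Vxy := dot (V *m x) y; set Vxx := dot (V *m x) x.
move=> sq_ge0.
have scaled : 0 <= (L * (L * Vyy) + L * Vxy + (L * Vxy + Vxx)) / (2 * L).
  by apply: divr_ge0 => //; lra.
have -> : L / 2 * Vyy + 1 / (2 * L) * Vxx
        = (L * (L * Vyy) + L * Vxy + (L * Vxy + Vxx)) / (2 * L) - Vxy.
  by field; rewrite gt_eqF.
lra.
Qed.

Lemma sqnormM_implicit_step M s x0 x1 v a : SPD M -> x1 = x0 + a *: v ->
  sqnormM M (x1 - s) - 2 * a * dot (M *m v) (x1 - s) <= sqnormM M (x0 - s).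
Proof.
move=> spd ->; have -> : x0 - s = (x0 + a *: v - s) - a *: v by rewrite addrAC addrK.
rewrite (sqnormMB (x0 + a *: v - s) _ spd.1) sqnormMZ -scalemxAr dotZl.
have := sqnormM_ge0 v spd; have := sqr_ge0 a; nra.
Qed.

End InnerProduct.

Section Bregman.
Variables (R : realType) (k : nat).
Variables (g : 'cV[R]_k -> R) (gg : 'cV[R]_k -> 'cV[R]_k).
Implicit Types (x y z : 'cV[R]_k) (M : 'M[R]_k).

Lemma Dg_ge0 x y : convex_fun g -> is_gradient g gg -> 0 <= Dg g gg y x.
Proof.
move=> cvx /(_ x) [_ /(_ (y - x)) [ex derivative]].
rewrite /Dg -derivative subr_ge0.
apply: (cvgr_to_le (cvg_dnbhs_at_right ex)).
near=> t.
have t_gt0 : 0 < t by near: t; exact: nbhs_right_gt.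
have t_le1 : t <= 1 by near: t; exact: nbhs_right_le.
have := cvx y x t; rewrite (ltW t_gt0) t_le1 => /(_ isT).
have -> : t *: y + (1 - t) *: x = t *: (y - x) + x.
  by rewrite scalerBr scalerBl scale1r [x - _]addrC addrA.
move=> chord; rewrite -[_ *: _]/(_ * _) mulrC ler_pdivrMr //=; lra.
Unshelve. all: by end_near.
Qed.

Lemma Dg_symmetrized x y : Dg g gg y x + Dg g gg x y = dot (gg x - gg y) (x - y).
Proof. by rewrite /Dg -(opprB x y) dotNr !dotBl; lra. Qed.

Lemma Dg_three_point x y z :
  Dg g gg x y = Dg g gg z y - Dg g gg z x + dot (gg x - gg y) (x - z).
Proof. by rewrite /Dg !dotBl !dotBr; lra. Qed.

Lemma gradient_monotone x y :
  convex_fun g -> is_gradient g gg -> 0 <= dot (gg x - gg y) (x - y).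
Proof.
by move=> cvx grad; rewrite -Dg_symmetrized addr_ge0 // Dg_ge0.
Qed.

Lemma strongly_convex_monotone M mu x y : strongly_convex g gg M mu ->
  mu * sqnormM M (x - y) <= dot (gg x - gg y) (x - y).
Proof.
move=> sc; rewrite -Dg_symmetrized.
have := sc x y; have := sc y x; rewrite -(opprB x y) sqnormMN; lra.
Qed.

(* Use the upper bound of S11 at the point z = x - L^-1 M^-1 (gg x - gg y). *)
Lemma S11_Dg_cocoercive M mu L x y : SPD M -> S11 g gg M mu L -> 0 <= mu -> 0 < L ->
  1 / (2 * L) * dot (invmx M *m (gg x - gg y)) (gg x - gg y) <= Dg g gg x y.
Proof.
move=> spd smooth mu_ge0 L_gt0.
set w := gg x - gg y; set d := L^-1 *: (invmx M *m w).
rewrite (Dg_three_point x y (x - d)) subKr.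
have Dzy_ge0 : 0 <= Dg g gg (x - d) y.
  have [lower _] := smooth y (x - d).
  by apply: le_trans lower; rewrite mulr_ge0 ?sqnormM_ge0 ?divr_ge0.
have [_ Dzx_le] := smooth x (x - d).
move: Dzx_le; rewrite subKr sqnormMZ /sqnormM mulmxA.
rewrite (mulmxV (SPD_unitmx spd)) mul1mx dotZr (dotC w).
set q := dot (invmx M *m w) w.
have -> : L / 2 * (L^-1 ^+ 2 * q) = 1 / (2 * L) * q by field; rewrite gt_eqF.
have -> : L^-1 * q = 2 * (1 / (2 * L) * q) by field; rewrite gt_eqF.
lra.
Qed.

Lemma S11_monotone M mu L x y : SPD M -> S11 g gg M mu L -> 0 <= mu -> 0 < L ->
  mu / 2 * sqnormM M (x - y)
    + 1 / (2 * L) * dot (invmx M *m (gg x - gg y)) (gg x - gg y)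
  <= dot (gg x - gg y) (x - y).
Proof.
move=> spd smooth mu_ge0 L_gt0; rewrite -Dg_symmetrized.
by apply: lerD; [case: (smooth x y) | apply: S11_Dg_cocoercive].
Qed.

End Bregman.

Section SaddlePointFlow.
Variables (R : realType) (n m : nat) (B : 'M[R]_(n, m)).
Variables (f : 'cV[R]_m -> R) (gf : 'cV[R]_m -> 'cV[R]_m).
Variables (h : 'cV[R]_n -> R) (gh : 'cV[R]_n -> 'cV[R]_n).
Variables (IV : 'M[R]_m) (IQ : 'M[R]_n) (us : 'cV[R]_m) (ps : 'cV[R]_n).
Variables (mu_f L_f mu_hB : R).
Hypotheses (saddle_u : gf us + B^T *m ps = 0) (saddle_p : B *m us = gh ps).
Hypotheses (IV_SPD : SPD IV) (IQ_SPD : SPD IQ).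
Hypotheses (h_convex : convex_fun h) (gh_gradient : is_gradient h gh).
Hypotheses (f_S11 : S11 f gf IV mu_f L_f) (mu_f_ge0 : 0 <= mu_f).
Hypotheses (L_f_gt0 : 0 < L_f) (L_f_lt2 : L_f < 2).
Hypothesis hB_strongly_convex :
  strongly_convex (hB B IV h) (grad_hB B IV gh) IQ mu_hB.

Local Notation V := (invmx IV).
Local Notation mu := (Num.min mu_f ((2 - L_f) * mu_hB)).

Lemma saddle_residual u p : gf u + B^T *m p = (gf u - gf us) + B^T *m (p - ps).
Proof. by rewrite mulmxBr addrACA -opprD saddle_u subr0. Qed.

Lemma mulmx_Gu u p : IV *m Gu B IV gf u p = - (gf u + B^T *m p).
Proof. by rewrite /Gu mulmxN mulKVmx ?SPD_unitmx. Qed.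

Lemma mulmx_Gp u p : IQ *m Gp B IV IQ gf gh u p
  = - ((gh p - gh ps) + B *m (V *m (gf u + B^T *m p)) - B *m (u - us)).
Proof.
rewrite /Gp mulmxN mulKVmx ?SPD_unitmx //; congr (- _).
rewrite /grad_hB /e_op -saddle_p -!mulmxA !mulmxBr !mulmxDr.
move: (gh p) (B *m us) (B *m u) (B *m (V *m gf u)) (B *m (V *m (B^T *m p))).
by move=> x1 x2 x3 x4 x5; apply/matrixP => i j; rewrite !mxE; lra.
Qed.

Lemma grad_hB_sub p : grad_hB B IV gh p - grad_hB B IV gh ps
  = (gh p - gh ps) + B *m (V *m (B^T *m (p - ps))).
Proof. by rewrite /grad_hB -!mulmxA !mulmxBr opprD addrACA. Qed.

Lemma coupling_cancel (g du : 'cV[R]_m) (c dp : 'cV[R]_n) :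
  dot (g + B^T *m dp) du + dot (c + B *m (V *m (g + B^T *m dp)) - B *m du) dp
  = dot g du + dot c dp + dot (V *m g) (B^T *m dp)
    + dot (V *m (B^T *m dp)) (B^T *m dp).
Proof. by rewrite dotBl !dotDl !(dotMl B) mulmxDr dotDl (dotC (B^T *m dp)); lra. Qed.

Lemma Lyap_strong u p :
  mu * Lyap IV IQ us ps u p
    <= - dot (IV *m Gu B IV gf u p) (u - us)
       - dot (IQ *m Gp B IV IQ gf gh u p) (p - ps).
Proof.
have f_part := S11_monotone u us IV_SPD f_S11 mu_f_ge0 L_f_gt0.
have hB_part := strongly_convex_monotone p ps hB_strongly_convex.
have h_part := gradient_monotone p ps h_convex gh_gradient.
have cross := dot_invmx_Young (gf u - gf us) (B^T *m (p - ps)) IV_SPD L_f_gt0.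
rewrite grad_hB_sub dotDl dotMl in hB_part.
rewrite mulmx_Gu mulmx_Gp saddle_residual /Lyap !dotNl !opprK coupling_cancel.
have Su_ge0 := sqnormM_ge0 (u - us) IV_SPD.
have Sp_ge0 := sqnormM_ge0 (p - ps) IQ_SPD.
set Su := sqnormM IV _ in f_part Su_ge0 *; set Sp := sqnormM IQ _ in hB_part Sp_ge0 *.
set Cc := dot (gh p - gh ps) _ in hB_part h_part *.
set Aa := dot (V *m (B^T *m _)) _ in hB_part cross *.
have mu_le_f : mu * Su <= mu_f * Su by rewrite ler_wpM2r // ge_min lexx.
have mu_le_hB : mu * Sp <= (2 - L_f) * mu_hB * Sp.
  by rewrite ler_wpM2r // ge_min lexx orbT.
have hB_scaled : (2 - L_f) * (mu_hB * Sp) <= (2 - L_f) * (Cc + Aa).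
  by rewrite ler_wpM2l // subr_ge0 ltW.
have h_scaled : 0 <= L_f * Cc by rewrite mulr_ge0 // ltW.
lra.
Qed.

Lemma Lyap_implicit_Euler_step u0 p0 u1 p1 a : 0 <= a ->
  u1 = u0 + a *: Gu B IV gf u1 p1 -> p1 = p0 + a *: Gp B IV IQ gf gh u1 p1 ->
  (1 + a * mu) * Lyap IV IQ us ps u1 p1 <= Lyap IV IQ us ps u0 p0.
Proof.
move=> a_ge0 step_u step_p.
have := sqnormM_implicit_step us IV_SPD step_u.
have := sqnormM_implicit_step ps IQ_SPD step_p.
have := ler_wpM2l a_ge0 (Lyap_strong u1 p1).
rewrite /Lyap; lra.
Qed.

End SaddlePointFlow.

Unset Implicit Arguments. Set Strict Implicit.

Theorem theorem4p1 (R : realType) (n m : nat) (B : 'M[R]_(n, m))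
  (f : 'cV[R]_m -> R) (gf : 'cV[R]_m -> 'cV[R]_m)
  (h : 'cV[R]_n -> R) (gh : 'cV[R]_n -> 'cV[R]_n)
  (IV : 'M[R]_m) (IQ : 'M[R]_n)
  (us : 'cV[R]_m) (ps : 'cV[R]_n)
  (mu_f L_f mu_hB : R)
  (u : nat -> 'cV[R]_m) (p : nat -> 'cV[R]_n) (alpha : nat -> R) :
  (n <= m)%N ->
  \rank B = n ->
  convex_fun f -> is_gradient f gf -> continuous gf -> lipschitz gf ->
  convex_fun h -> is_gradient h gh -> continuous gh -> lipschitz gh ->
  (* (us, ps) is a saddle point of L(u,p) = f(u) - h(p) + (Bu, p) *)
  gf us + B^T *m ps = 0 -> B *m us = gh ps ->
  SPD IV -> SPD IQ ->
  S11 f gf IV mu_f L_f -> 0 < mu_f -> mu_f <= L_f -> L_f < 2 ->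
  (* mu_hB : the strong convexity constant of h_B w.r.t. I_Q *)
  0 < mu_hB -> strongly_convex (hB B IV h) (grad_hB B IV gh) IQ mu_hB ->
  (forall k, 0 < alpha k) ->
  (forall k, u k.+1 = u k + alpha k *: Gu B IV gf (u k.+1) (p k.+1)) ->
  (forall k, p k.+1 = p k + alpha k *: Gp B IV IQ gf gh (u k.+1) (p k.+1)) ->
  forall k,
    Lyap IV IQ us ps (u k.+1) (p k.+1)
      <= 1 / (1 + alpha k * Num.min mu_f ((2 - L_f) * mu_hB))
         * Lyap IV IQ us ps (u k) (p k).
Proof.
(* Not used: full row rank of B (which in the paper makes h_B strongly convex),
   convexity of f (implied by S11) and the regularity of the gradients. *)
move=> _ _ _ _ _ _ h_convex gh_gradient _ _ saddle_u saddle_p IV_SPD IQ_SPD f_S11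
  mu_f_gt0 mu_f_le_L_f L_f_lt2 mu_hB_gt0 hB_strongly_convex alpha_gt0 step_u step_p k.
have L_f_gt0 : 0 < L_f := lt_le_trans mu_f_gt0 mu_f_le_L_f.
have mu_gt0 : 0 < Num.min mu_f ((2 - L_f) * mu_hB).
  by rewrite lt_min mu_f_gt0 mulr_gt0 // subr_gt0.
rewrite div1r ler_pdivlMl; last by rewrite addr_gt0 ?mulr_gt0.
exact: (Lyap_implicit_Euler_step saddle_u saddle_p IV_SPD IQ_SPD h_convex gh_gradient
  f_S11 (ltW mu_f_gt0) L_f_gt0 L_f_lt2 hB_strongly_convex (ltW (alpha_gt0 k))
  (step_u k) (step_p k)).
Qed.
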